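(* Let $p\in(-1,\infty)$, $\beta\ge0$, and $\gamma_*>0$ satisfy: - $\gamma_*\in[(1+\beta)^{-p},1]$ if $p\ge0$; - $\gamma_*\in[1,(1+\beta)^{-p}]$ if $p\le0$. For $\alpha\in(0,1)$, let $\omega_1^*(\alpha,\gamma_* )$ denote the first component of the unique solution $(\omega_1,\omega_2)$, with $0<\omega_1\le\omega_2$, of the system $$\alpha\,\omega_1+(1-\alpha)\,\omega_2=1+\beta,\qquad \frac{\alpha}{\omega_1^{p+1}}+\frac{1-\alpha}{\omega_2^{p+1}}=\gamma_*.$$ Then $\alpha\mapsto\omega_1^*(\alpha,\gamma_* )$ is non-decreasing on $(0,1)$.
   Context: The system in the claim has, for every $\alpha\in(0,1)$ and every $\beta$, $\gamma_*$ as stated, exactly one solution with $0<\omega_1\le\omega_2$, so $\omega_1^*(\alpha,\gamma_* )$ is well defined. *)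

From Stdlib Require Import Reals.
Open Scope R_scope.

Definition is_sol (p beta gamma alpha w1 w2 : R) : Prop :=
  0 < w1 /\ w1 <= w2 /\
  alpha * w1 + (1 - alpha) * w2 = 1 + beta /\
  alpha / Rpower w1 (p + 1) + (1 - alpha) / Rpower w2 (p + 1) = gamma.

From Stdlib Require Import Reals Lra.
Open Scope R_scope.

(* Write q = p + 1 > 0 and f t = t^(-q), so that the second equation of the
   system reads  alpha f(w1) + (1-alpha) f(w2) = gamma,  while the first says
   that both alpha and alpha' produce the same barycentre 1 + beta.  Suppose
   alpha <= alpha' but w1' < w1.  Balancing the barycentre forces w2 < w2', so
   w1' < w1 <= w2 < w2': the alpha-solution lives strictly inside the interval
   spanned by the alpha'-solution.  Since f is strictly convex, a convex
   combination of values of f at interior points lies strictly below the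
   combination of the endpoint values with the same barycentre, i.e.
   gamma < gamma, a contradiction. *)

Definition below_chord (f : R -> R) (x z : R) : Prop :=
  forall y, x < y < z -> f y < f x + (f z - f x) / (z - x) * (y - x).

(* A function with strictly increasing derivative on [x, z] lies strictly
   below its chord there: the mean slope on [x, y] is smaller than on [y, z]. *)
Lemma below_chord_of_increasing_derivative (f f' : R -> R) (x z : R) :
  (forall c, x <= c <= z -> derivable_pt_lim f c (f' c)) ->
  (forall c d, x <= c -> c < d -> d <= z -> f' c < f' d) ->
  below_chord f x z.
Proof.
  intros Df Incr y [hxy hyz].
  destruct (MVT_cor2 f f' x y hxy) as [c1 [E1 [H1 H1']]].
  { intros c hc. apply Df; lra. }
  destruct (MVT_cor2 f f' y z hyz) as [c2 [E2 [H2 H2']]].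
  { intros c hc. apply Df; lra. }
  assert (Hslopes : f' c1 < f' c2) by (apply Incr; lra).
  assert (Hchord : f' c1 < (f z - f x) / (z - x)).
  { apply Rmult_lt_reg_r with (z - x); [lra|].
    unfold Rdiv. rewrite Rmult_assoc, Rinv_l by lra. nra. }
  nra.
Qed.

(* For q > 0 the map t |-> t^(-q) is strictly convex on (0, +oo): its
   derivative -q t^(-q-1) is strictly increasing. *)
Lemma Rpower_neg_below_chord (q x z : R) :
  0 < q -> 0 < x ->
  below_chord (fun t => Rpower t (- q)) x z.
Proof.
  intros hq hx.
  apply below_chord_of_increasing_derivative
    with (f' := fun t => - q * Rpower t (- q - 1)).
  - intros c hc. apply derivable_pt_lim_power; lra.
  - intros c d hc hcd hd.
    replace (- q - 1) with (- (q + 1)) by ring.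
    rewrite !Rpower_Ropp.
    assert (Hlt : Rpower c (q + 1) < Rpower d (q + 1))
      by (apply Rlt_Rpower_l; lra).
    assert (Hc : 0 < Rpower c (q + 1)) by (unfold Rpower; apply exp_pos).
    assert (Hinv : / Rpower d (q + 1) < / Rpower c (q + 1))
      by (apply Rinv_lt_contravar; nra).
    nra.
Qed.

(* Strict Jensen-type comparison: if f is strictly below its chord on (x, z),
   a convex combination of values at interior points u, v is strictly smaller
   than the convex combination of the endpoint values with the same
   barycentre (the latter equals the chord evaluated at that barycentre). *)
Lemma interior_mean_lt_endpoint_mean (f : R -> R) (x z u v a b : R) :
  x < z -> below_chord f x z ->
  x < u < z -> x < v < z -> 0 < a < 1 ->
  a * u + (1 - a) * v = b * x + (1 - b) * z ->
  a * f u + (1 - a) * f v < b * f x + (1 - b) * f z.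
Proof.
  intros hxz Hf hu hv ha Hbar.
  set (m := (f z - f x) / (z - x)).
  assert (Hfu : f u < f x + m * (u - x)) by (apply Hf; exact hu).
  assert (Hfv : f v < f x + m * (v - x)) by (apply Hf; exact hv).
  assert (Hfz : f z = f x + m * (z - x)) by (unfold m; field; lra).
  assert (Hmean : a * f u + (1 - a) * f v
                  < f x + m * (a * u + (1 - a) * v - x)) by nra.
  rewrite Hbar in Hmean. rewrite Hfz. nra.
Qed.

Lemma second_point_moves_right (a a' w1 w2 w1' w2' : R) :
  0 < a -> a <= a' -> a' < 1 ->
  w1' < w1 -> w1 <= w2 ->
  a * w1 + (1 - a) * w2 = a' * w1' + (1 - a') * w2' ->
  w2 < w2'.
Proof.
  intros ha haa ha' h1 h12 Hbar.
  apply Rmult_lt_reg_l with (1 - a'); [lra|]. nra.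
Qed.

Lemma is_sol_weighted_power (p beta gamma a w1 w2 : R) :
  is_sol p beta gamma a w1 w2 ->
  a * Rpower w1 (- (p + 1)) + (1 - a) * Rpower w2 (- (p + 1)) = gamma.
Proof.
  intros [_ [_ [_ Hg]]]. rewrite !Rpower_Ropp. exact Hg.
Qed.

Theorem mainTheorem7 (p beta gamma : R)
  (hp : -1 < p) (hbeta : 0 <= beta) (hgamma : 0 < gamma)
  (hpos : 0 <= p -> Rpower (1 + beta) (- p) <= gamma <= 1)
  (hneg : p <= 0 -> 1 <= gamma <= Rpower (1 + beta) (- p)) :
  forall (a a' w1 w2 w1' w2' : R),
    0 < a -> a <= a' -> a' < 1 ->
    is_sol p beta gamma a w1 w2 ->
    is_sol p beta gamma a' w1' w2' ->
    w1 <= w1'.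
Proof.
  intros a a' w1 w2 w1' w2' ha haa ha' Hs Hs'.
  pose proof (is_sol_weighted_power _ _ _ _ _ _ Hs) as Hval.
  pose proof (is_sol_weighted_power _ _ _ _ _ _ Hs') as Hval'.
  destruct Hs as [h1 [h12 [Hbar _]]], Hs' as [h1' [_ [Hbar' _]]].
  destruct (Rle_or_lt w1 w1') as [Hle | Hlt]; [exact Hle | exfalso].
  assert (Hw2 : w2 < w2').
  { apply (second_point_moves_right a a' w1 w2 w1' w2'); lra. }
  assert (Hconv : below_chord (fun t => Rpower t (- (p + 1))) w1' w2')
    by (apply Rpower_neg_below_chord; lra).
  assert (Hstrict : gamma < gamma).
  { rewrite <- Hval at 1. rewrite <- Hval'.
    apply (interior_mean_lt_endpoint_mean (fun t => Rpower t (- (p + 1)))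
             w1' w2' w1 w2 a a'); [lra | exact Hconv | lra ..]. }
  lra.
Qed.
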